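(* Let $\ell$ be a nondegenerate Hermitian form on a complex $n$-dimensional space $W$, $A$ an $\ell$-self-adjoint antilinear operator, and $\lambda^2>0$ an eigenvalue of $A^2$. Let $s_1$ be the least positive integer with $\ker(A^2-\lambda^2I)^{s_1}=\ker(A^2-\lambda^2I)^{n}$. Then there is an $s_1$-dimensional $A$-invariant subspace $V\subset\ker(A^2-\lambda^2I)^n$ on which $\ell$ is nondegenerate, and a basis of $V$ with respect to which $\ell|_V$ and $A|_V$ are represented by $\pm S_{s_1}$ and $J_{|\lambda|,s_1}$ respectively.
   Context: An antilinear operator satisfies $A(zv+w)=\bar zAv+Aw$; $\ell$ is linear in the first argument and conjugate-linear in the second; $A$ is $\ell$-self-adjoint if $\ell(Av,w)=\ell(Aw,v)$. In a basis $e_1,\dots,e_k$, $\ell$ is represented by $H_{i,j}=\ell(e_j,e_i)$ and $A$ by $C$ with $Ae_i=\sum_m C_{m,i}e_m$. $S_k$ has $(i,j)$ entry $1$ if $i+j=k+1$, else $0$; $J_{\mu,k}=\mu I_k+T_k$ with $T_k$ having $(i,j)$ entry $1$ if $j-i=1$, else $0$. *)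

(* The complex field is modelled by an arbitrary
   numClosedFieldType C (e.g. algC), conjugation is z^*. *)
From HB Require Import structures.
From mathcomp Require Export all_boot all_order all_algebra.
Set Implicit Arguments. Unset Strict Implicit. Unset Printing Implicit Defensive.
Export Order.TTheory GRing.Theory Num.Theory.
Local Open Scope ring_scope.

(* W = C^n, vectors are row vectors 'rV[C]_n. *)

Definition is_hermitian_form (C : numClosedFieldType) (n : nat)
  (l : 'rV[C]_n -> 'rV[C]_n -> C) : Prop :=
  (forall (a : C) u v w, l (a *: u + v) w = a * l u w + l v w) /\
  (forall (a : C) u v w, l w (a *: u + v) = a^* * l w u + l w v) /\
  (forall v w, l v w = (l w v)^*).

Definition is_nondegenerate (C : numClosedFieldType) (n : nat)
  (l : 'rV[C]_n -> 'rV[C]_n -> C) : Prop :=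
  forall v, (forall w, l v w = 0) -> v = 0.

Definition antilinear (C : numClosedFieldType) (n : nat)
  (A : 'rV[C]_n -> 'rV[C]_n) : Prop :=
  forall (z : C) v w, A (z *: v + w) = z^* *: A v + A w.

Definition l_selfadjoint (C : numClosedFieldType) (n : nat)
  (l : 'rV[C]_n -> 'rV[C]_n -> C) (A : 'rV[C]_n -> 'rV[C]_n) : Prop :=
  forall v w, l (A v) w = l (A w) v.

Definition in_kerpow (C : numClosedFieldType) (n : nat)
  (A : 'rV[C]_n -> 'rV[C]_n) (mu : C) (k : nat) (v : 'rV[C]_n) : Prop :=
  iter k (fun x => A (A x) - mu *: x) v = 0.

(* S_k : (i,j) entry 1 iff i+j = k+1 (1-based), i.e. i+j = k-1 (0-based) *)
Definition Smx (C : numClosedFieldType) (k : nat) : 'M[C]_k :=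
  \matrix_(i < k, j < k) (if (i + j)%N == k.-1 then 1 else 0).

Definition Jmx (C : numClosedFieldType) (mu : C) (k : nat) : 'M[C]_k :=
  \matrix_(i < k, j < k)
     ((if i == j :> nat then mu else 0) + (if j == i.+1 :> nat then 1 else 0)).

(* Let mu = |lam| and T = A - mu, so that A^2 - lam^2 = (A + mu) T. Self-adjointness
   of A makes l real-valued and T symmetric on pairs of vectors killed by powers
   of T; hence the moments m_q(y) = l (T^q y) y of a vector y with T^s y = 0 are
   real.  By Fitting's lemma l is nondegenerate on the generalized eigenspace,
   which yields y with m_(s-1)(y) <> 0.  The lower moments are then killed one at
   a time by replacing y with y + a T^j y for a real a, and y is rescaled so that
   m_(s-1)(y) = +-1.  In the basis T^(s-1) y, ..., T y, y the form is +-S_s and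
   A = mu + T acts as J_(mu,s). *)

From mathcomp Require Import all_boot all_order all_algebra.
From mathcomp Require Import zify ring.
From Stdlib Require Import Classical.
Set Implicit Arguments. Unset Strict Implicit. Unset Printing Implicit Defensive.
Import GRing.Theory Num.Theory.
Local Open Scope ring_scope.

Lemma iter_comm (T : Type) (f g : T -> T) k x :
  (forall y, f (g y) = g (f y)) -> iter k f (g x) = g (iter k f x).
Proof. by move=> fg; elim: k => //= k ->; exact: fg. Qed.

Lemma iter_morph2 (T : Type) (f : T -> T) (op : T -> T -> T) k x y :
  (forall x y, f (op x y) = op (f x) (f y)) ->
  iter k f (op x y) = op (iter k f x) (iter k f y).
Proof. by move=> fop; elim: k => //= k ->. Qed.

Lemma iter_mul_comm (T : Type) (f g h : T -> T) k z :
  (forall x, f (g x) = h x) -> (forall x, g (h x) = h (g x)) ->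
  iter k f (iter k g z) = iter k h z.
Proof.
move=> fgh gh; elim: k z => [//|k IH] z.
by rewrite iterSr [iter k.+1 g _]iterS fgh iterSr -IH (iter_comm k z gh).
Qed.

Lemma exists_iter_index (V : zmodType) (f : V -> V) (v0 : V) s n :
  f 0 = 0 -> v0 != 0 -> f v0 = 0 -> (0 < s)%N ->
  (forall v, iter s f v = 0 <-> iter n f v = 0) ->
  (forall k, (0 < k < s)%N -> ~ (forall v, iter k f v = 0 <-> iter n f v = 0)) ->
  exists v, iter s f v = 0 /\ iter s.-1 f v != 0.
Proof.
move=> f0 v0_neq0 fv0 s_gt0 ker_s ker_min.
have [->|s_neq1] := eqVneq s 1%N; first by exists v0.
apply: NNPP => none; apply: (ker_min s.-1); first lia.
move=> v; rewrite -ker_s; split=> hv; first by rewrite -(prednK s_gt0) iterS hv f0.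
by have [//|?] := eqVneq (iter s.-1 f v) 0; case: none; exists v.
Qed.

Section PowerStabilization.
Variables (F : fieldType) (n : nat) (M : 'M[F]_n).

Lemma expmx_succ_sub k : (M ^+ k.+1 <= M ^+ k)%MS.
Proof. by rewrite exprS -mulmxE submxMl. Qed.

Lemma expmx_stable k j :
  (M ^+ k.+1 == M ^+ k)%MS -> (M ^+ (k + j) == M ^+ k)%MS.
Proof.
move=> /eqmxP Ek; elim: j => [|j /eqmxP IH]; first by rewrite addn0; apply/eqmxP.
rewrite addnS exprSr -mulmxE; apply/eqmxP.
by apply: eqmx_trans (eqmxMr M IH) _; rewrite mulmxE -exprSr.
Qed.

(* The ranks of the powers of M decrease strictly until the powers stabilize. *)
Lemma expmx_stable_le : exists2 k, (k <= n)%N & (M ^+ k.+1 == M ^+ k)%MS.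
Proof.
have [/existsP[k Ek]|none] := boolP [exists k : 'I_n.+1, (M ^+ k.+1 == M ^+ k)%MS].
  by exists k => //; rewrite -ltnS.
suff /(_ n.+1 (leqnn _)) : forall k, (k <= n.+1)%N -> (\rank (M ^+ k) + k <= n)%N.
  by lia.
elim=> [_|k IH kn]; first by rewrite expr0 mxrank1 addn0.
have : (\rank (M ^+ k.+1) < \rank (M ^+ k))%N.
  rewrite ltn_neqAle mxrankS ?expmx_succ_sub // andbT.
  rewrite (mxrank_leqif_eq (expmx_succ_sub k)).2.
  apply: contraNN none => Ek; apply/existsP; exists (Ordinal kn); exact: Ek.
by have := IH (ltnW kn); lia.
Qed.

Lemma expmx_sub_double : (M ^+ n <= M ^+ (n + n))%MS.
Proof.
have [k kn Ek] := expmx_stable_le.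
have /andP[sub_nk _] := expmx_stable (n - k) Ek.
have /andP[_ sub_kn2] := expmx_stable (n + n - k) Ek.
rewrite subnKC // in sub_nk; rewrite subnKC ?(leq_trans kn (leq_addr _ _)) // in sub_kn2.
exact: submx_trans sub_nk sub_kn2.
Qed.

End PowerStabilization.

(* Fitting's lemma: modulo the image of [f ^ n], every vector lies in the
   kernel of [f ^ n]. *)
Lemma iter_linear_fitting (F : fieldType) n (f : 'rV[F]_n -> 'rV[F]_n) w :
  (forall a u v, f (a *: u + v) = a *: f u + f v) ->
  exists z, iter n f (w - iter n f z) = 0.
Proof.
move=> f_lin; pose M := \matrix_(i < n, j < n) f (delta_mx 0 i) 0 j.
have f0 : f 0 = 0 by have := f_lin (-1) 0 0; rewrite scaler0 addr0 scaleN1r addNr.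
have fD u v : f (u + v) = f u + f v by have := f_lin 1 u v; rewrite !scale1r.
have fZ a u : f (a *: u) = a *: f u by rewrite -[a *: u]addr0 f_lin f0 addr0.
have fM u : f u = u *m M.
  rewrite mulmx_sum_row {1}(row_sum_delta u) (big_morph f fD f0).
  by apply: eq_bigr => i _; rewrite fZ; congr (_ *: _); apply/rowP => j; rewrite !mxE.
have fMk k u : iter k f u = u *m M ^+ k.
  elim: k => [|k IH]; first by rewrite expr0 mulmx1.
  by rewrite iterS IH fM -mulmxA mulmxE -exprSr.
have /submxP [z hz] : (w *m M ^+ n <= M ^+ (n + n))%MS.
  exact: submx_trans (submxMl w _) (expmx_sub_double M).
by exists z; rewrite !fMk mulmxBl hz -mulmxA mulmxE -exprD subrr.
Qed.

Section SelfadjointAntilinear.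
Variables (C : numClosedFieldType) (n : nat).
Variables (l : 'rV[C]_n -> 'rV[C]_n -> C) (A : 'rV[C]_n -> 'rV[C]_n).
Hypotheses (l_herm : is_hermitian_form l) (A_antilin : antilinear A).
Hypothesis A_sa : l_selfadjoint l A.

Lemma formC v w : l v w = (l w v)^*.
Proof. by case: l_herm => _ []. Qed.

Lemma form0l w : l 0 w = 0.
Proof.
by case: l_herm => lin _; have := lin (-1) 0 0 w; rewrite scaler0 addr0 mulN1r addNr.
Qed.

Lemma formDl u v w : l (u + v) w = l u w + l v w.
Proof. by case: l_herm => lin _; have := lin 1 u v w; rewrite scale1r mul1r. Qed.

Lemma formZl a u w : l (a *: u) w = a * l u w.
Proof. by case: l_herm => lin _; rewrite -[a *: u]addr0 lin form0l addr0. Qed.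

Lemma formBl u v w : l (u - v) w = l u w - l v w.
Proof. by rewrite formDl -scaleN1r formZl mulN1r. Qed.

Lemma form0r w : l w 0 = 0.
Proof. by rewrite formC form0l conjC0. Qed.

Lemma formDr u v w : l w (u + v) = l w u + l w v.
Proof. by rewrite formC formDl rmorphD /= -!formC. Qed.

Lemma formZr a u w : l w (a *: u) = a^* * l w u.
Proof. by rewrite formC formZl rmorphM /= -formC. Qed.

Lemma formBr u v w : l w (u - v) = l w u - l w v.
Proof. by rewrite formDr -scaleN1r formZr rmorphN1 mulN1r. Qed.

Lemma form_adjr x y : l x (A y) = (l (A x) y)^*.
Proof. by rewrite formC A_sa. Qed.

Lemma antilin0 : A 0 = 0.
Proof.
by have := A_antilin (-1) 0 0; rewrite scaler0 addr0 rmorphN1 scaleN1r addNr.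
Qed.

Lemma antilinD u v : A (u + v) = A u + A v.
Proof. by have := A_antilin 1 u v; rewrite conjC1 !scale1r. Qed.

Lemma antilinZ a u : A (a *: u) = a^* *: A u.
Proof. by rewrite -[a *: u]addr0 A_antilin antilin0 addr0. Qed.

Lemma antilinB u v : A (u - v) = A u - A v.
Proof. by rewrite antilinD -scaleN1r antilinZ rmorphN1 scaleN1r. Qed.

Section ShiftedOperators.
Variable mu : C.
Hypotheses (mu_real : mu^* = mu) (mu_neq0 : mu != 0).

Definition Tm x := A x - mu *: x.
Definition Tp x := A x + mu *: x.
Definition Nsq x := A (A x) - mu ^+ 2 *: x.

Lemma Tm0 : Tm 0 = 0.
Proof. by rewrite /Tm antilin0 scaler0 subr0. Qed.

Lemma TmD u v : Tm (u + v) = Tm u + Tm v.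
Proof. by rewrite /Tm antilinD scalerDr addrACA opprD. Qed.

Lemma TmZ r u : r^* = r -> Tm (r *: u) = r *: Tm u.
Proof. by move=> r_real; rewrite /Tm antilinZ r_real scalerBr !scalerA mulrC. Qed.

Lemma Tm_A x : Tm (A x) = A (Tm x).
Proof. by rewrite /Tm antilinB antilinZ mu_real. Qed.

Lemma Tp0 : Tp 0 = 0.
Proof. by rewrite /Tp antilin0 scaler0 addr0. Qed.

Lemma Tm_Tp x : Tm (Tp x) = Nsq x.
Proof.
rewrite /Tm /Tp /Nsq antilinD antilinZ mu_real.
by apply/rowP => j; rewrite !mxE; ring.
Qed.

Lemma Tp_Tm x : Tp (Tm x) = Nsq x.
Proof.
rewrite /Tm /Tp /Nsq antilinB antilinZ mu_real.
by apply/rowP => j; rewrite !mxE; ring.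
Qed.

Lemma Tp_Nsq x : Tp (Nsq x) = Nsq (Tp x).
Proof. by rewrite -Tm_Tp Tp_Tm. Qed.

Lemma Tm_Nsq x : Tm (Nsq x) = Nsq (Tm x).
Proof. by rewrite -Tp_Tm Tm_Tp. Qed.

Lemma Tm_Tp_comm x : Tm (Tp x) = Tp (Tm x).
Proof. by rewrite Tm_Tp Tp_Tm. Qed.

Lemma Nsq_linear a u v : Nsq (a *: u + v) = a *: Nsq u + Nsq v.
Proof.
rewrite /Nsq !A_antilin conjCK.
by apply/rowP => j; rewrite !mxE; ring.
Qed.

Lemma iter_Tm0 k : iter k Tm 0 = 0.
Proof. exact: iter_fix Tm0. Qed.

Lemma iter_TmD k u v : iter k Tm (u + v) = iter k Tm u + iter k Tm v.
Proof. exact: iter_morph2 TmD. Qed.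

Lemma iter_TmZ k r u : r^* = r -> iter k Tm (r *: u) = r *: iter k Tm u.
Proof. by move=> r_real; apply: iter_comm => x; exact: TmZ. Qed.

Lemma iter_Tm_Tp k x : iter k Tm (iter k Tp x) = iter k Nsq x.
Proof. exact: iter_mul_comm Tm_Tp Tp_Nsq. Qed.

Lemma iter_Tm_genker a k x : iter a Tm x = 0 -> iter a Tm (iter k Tm x) = 0.
Proof. by move=> hx; rewrite -iterD addnC iterD hx iter_Tm0. Qed.

Lemma iter_Tp_Tm k x : iter k Tp (iter k Tm x) = iter k Nsq x.
Proof. exact: iter_mul_comm Tp_Tm Tm_Nsq. Qed.

Lemma iter_Nsq_of_Tm k x : iter k Tm x = 0 -> iter k Nsq x = 0.
Proof. by move=> hx; rewrite -iter_Tp_Tm hx (iter_fix _ Tp0). Qed.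

Lemma NsqD u v : Nsq (u + v) = Nsq u + Nsq v.
Proof. by have := Nsq_linear 1 u v; rewrite !scale1r. Qed.

Lemma Nsq0 : Nsq 0 = 0.
Proof. by rewrite -Tm_Tp Tp0 Tm0. Qed.

Lemma iter_Nsq0 k : iter k Nsq 0 = 0.
Proof. exact: iter_fix Nsq0. Qed.

Lemma iter_NsqD k u v : iter k Nsq (u + v) = iter k Nsq u + iter k Nsq v.
Proof. exact: iter_morph2 NsqD. Qed.

Lemma iter_NsqZ k a u : iter k Nsq (a *: u) = a *: iter k Nsq u.
Proof.
apply: iter_comm => x.
by rewrite -[a *: x]addr0 Nsq_linear Nsq0 addr0.
Qed.

(* Induction on the nilpotency orders: the hypotheses on [Tm x] and [Tm y]
   express [l (A x) y] in two ways, whose comparison gives [2 mu] times the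
   imaginary part of [l x y]. *)
Lemma form_real_genker a b x y :
  iter a Tm x = 0 -> iter b Tm y = 0 -> (l x y)^* = l x y.
Proof.
elim: a b x y => [|a IHa] b x y; first by move=> /= ->; rewrite form0l conjC0.
elim: b y => [|b IHb] y hx; first by move=> /= ->; rewrite form0r conjC0.
move=> hy; have := IHa b.+1 (Tm x) y; rewrite -iterSr => /(_ hx hy).
have := IHb (Tm y) hx; rewrite -iterSr => /(_ hy).
rewrite /Tm formBl formZl formBr formZr mu_real form_adjr.
set P := l (A x) y; set L := l x y.
rewrite !rmorphB !rmorphM /= conjCK mu_real => h2 h1.
have e : mu *+ 2 * (L^* - L) =
    (P - mu * L - (P^* - mu * L^*)) + (P^* - mu * L - (P - mu * L^*)) by ring.
rewrite -h1 -h2 !subrr addr0 in e.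
by move/eqP: e; rewrite mulf_eq0 mulrn_eq0 (negbTE mu_neq0) subr_eq0 => /eqP.
Qed.

Lemma form_Tm_sym a b x y :
  iter a Tm x = 0 -> iter b Tm y = 0 -> l (Tm x) y = l x (Tm y).
Proof.
move=> hx hy; have hAx : iter a Tm (A x) = 0 by rewrite (iter_comm _ _ Tm_A) hx antilin0.
have := form_real_genker hAx hy.
by rewrite /Tm formBl formZl formBr formZr mu_real form_adjr => ->.
Qed.

Lemma form_iter_Tm_sym a b k x y :
  iter a Tm x = 0 -> iter b Tm y = 0 -> l (iter k Tm x) y = l x (iter k Tm y).
Proof.
move=> hx; elim: k y => [//|k IH] y hy.
have hTy : iter b Tm (Tm y) = 0 by rewrite -iterSr iterS hy Tm0.
by rewrite iterS (form_Tm_sym (iter_Tm_genker k hx) hy) (IH _ hTy) -iterSr.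
Qed.

Lemma form_Nsq_sym x y : l (Nsq x) y = l x (Nsq y).
Proof.
rewrite /Nsq formBl formZl formBr formZr rmorphXn /= mu_real.
by rewrite (A_sa (A x)) (formC x (A (A y))) (A_sa (A y)) -formC.
Qed.

Lemma form_iter_Nsq_sym k x y : l (iter k Nsq x) y = l x (iter k Nsq y).
Proof. by elim: k y => [//|k IH] y; rewrite iterS form_Nsq_sym IH -iterSr. Qed.

(* Nondegeneracy of [l] on the generalized eigenspace: by Fitting's lemma its
   complement is the image of [Nsq ^ n], which is [l]-orthogonal to it. *)
Lemma genker_form_partner u :
  is_nondegenerate l -> u != 0 -> iter n Nsq u = 0 ->
  exists k, iter n Nsq k = 0 /\ l u k != 0.
Proof.
move=> l_nondeg u_neq0 hu.
have [w lw] : exists w, l u w != 0.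
  apply: NNPP => none; move/eqP: u_neq0; apply; apply: l_nondeg => w.
  by have [//|lw] := eqVneq (l u w) 0; case: none; exists w.
have [z hz] := iter_linear_fitting w Nsq_linear.
exists (w - iter n Nsq z); split => //.
by rewrite formBr -form_iter_Nsq_sym hu form0l subr0.
Qed.

Definition moment q y := l (iter q Tm y) y.

Section Chain.
Variable s : nat.
Hypothesis s_gt0 : (0 < s)%N.

(* If [Tp] kills [w = Nsq^(s-1) v], replacing [v] by ['i v] makes
   [Tp w] equal to [2 'i mu w]. *)
Lemma exists_top_vector v : iter s Nsq v = 0 -> iter s.-1 Nsq v != 0 ->
  exists x, iter s Tm x = 0 /\ iter s.-1 Tm x != 0.
Proof.
move=> vs vs1.
have [v1 [v1s v1ne]] : exists v1, iter s Nsq v1 = 0 /\ Tp (iter s.-1 Nsq v1) != 0.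
  have [Tw0|] := eqVneq (Tp (iter s.-1 Nsq v)) 0; last by exists v.
  exists ('i *: v); rewrite !iter_NsqZ vs scaler0; split => //.
  move: vs1 Tw0; set w := iter s.-1 Nsq v => w_neq0 Tw0.
  have Aw : A w = - (mu *: w) by apply/eqP; rewrite -addr_eq0; apply/eqP.
  have -> : Tp ('i *: w) = ('i * mu *+ 2) *: w.
    by rewrite /Tp antilinZ Aw conjCi; apply/rowP => j; rewrite !mxE; ring.
  rewrite scaler_eq0 mulrn_eq0 mulf_eq0 (negbTE (neq0Ci C)) (negbTE mu_neq0).
  by rewrite (negbTE w_neq0).
exists (iter s Tp v1); split; first by rewrite iter_Tm_Tp.
have -> : iter s Tp v1 = Tp (iter s.-1 Tp v1) by rewrite -iterS prednK.
by rewrite (iter_comm _ _ Tm_Tp_comm) iter_Tm_Tp.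
Qed.

(* With [rho z = 2 Re (l u z)] one has [l u (Tp z) = mu rho z] and
   [rho (Tp z) = 2 mu rho z]; so [y = Tp^s k1] works once [rho k1 != 0],
   which holds for [k1 = k] or [k1 = 'i k]. *)
Lemma exists_partner u k : Tm u = 0 -> iter s Nsq k = 0 -> l u k != 0 ->
  exists y, iter s Tm y = 0 /\ l u y != 0.
Proof.
move=> Tu ks luk; pose rho z := l u z + (l u z)^*.
have Au : A u = mu *: u by apply/eqP; rewrite -subr_eq0; apply/eqP.
have rho_real z : (rho z)^* = rho z by rewrite /rho rmorphD /= conjCK addrC.
have lu_Tp z : l u (Tp z) = mu * rho z.
  rewrite /Tp formDr formZr mu_real form_adjr Au formZl rmorphM /= mu_real.
  by rewrite /rho mulrDr addrC.
have rho_iter_Tp j z : rho (iter j Tp z) = (mu *+ 2) ^+ j * rho z.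
  elim: j => [|j IH]; first by rewrite mul1r.
  by rewrite iterS {1}/rho lu_Tp rmorphM /= mu_real rho_real IH exprS; ring.
have [k1 [k1s rk1]] : exists k1, iter s Nsq k1 = 0 /\ rho k1 != 0.
  have [rk|rk] := eqVneq (rho k) 0; last by exists k.
  exists ('i *: k); rewrite iter_NsqZ ks scaler0; split => //.
  apply: contra luk => /eqP rik.
  have : 'i *+ 2 * l u k = 'i * rho k - rho ('i *: k).
    by rewrite /rho formZr rmorphM /= conjCK conjCi; ring.
  by rewrite rk rik mulr0 subrr => /eqP; rewrite mulf_eq0 mulrn_eq0 (negbTE (neq0Ci C)).
exists (iter s Tp k1); split; first by rewrite iter_Tm_Tp.
have -> : iter s Tp k1 = Tp (iter s.-1 Tp k1) by rewrite -iterS prednK.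
by rewrite lu_Tp rho_iter_Tp !mulf_neq0 // expf_neq0 // mulrn_eq0 negb_or.
Qed.

Lemma moment_real q y : iter s Tm y = 0 -> (moment q y)^* = moment q y.
Proof. by move=> hy; apply: form_real_genker (iter_Tm_genker q hy) hy. Qed.

Lemma moment_high q y : iter s Tm y = 0 -> (s <= q)%N -> moment q y = 0.
Proof. by move=> hy sq; rewrite /moment -(subnK sq) iterD hy iter_Tm0 form0l. Qed.

Lemma form_iter_Tm_moment q j y : iter s Tm y = 0 ->
  l (iter q Tm y) (iter j Tm y) = moment (q + j) y.
Proof.
by move=> hy; rewrite -(form_iter_Tm_sym j (iter_Tm_genker q hy) hy) -iterD addnC.
Qed.

Lemma moment_shift q j a y : iter s Tm y = 0 -> a^* = a ->
  moment q (y + a *: iter j Tm y) =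
  moment q y + a * moment (q + j) y *+ 2 + a ^+ 2 * moment (q + j + j) y.
Proof.
move=> hy a_real; rewrite {1}/moment iter_TmD iter_TmZ // -iterD.
rewrite formDl !formDr !formZl !formZr a_real !form_iter_Tm_moment //.
by rewrite -/(moment q y) -/(moment (q + j) y); ring.
Qed.

Lemma exists_moment_top x y : iter s Tm x = 0 -> iter s Tm y = 0 ->
  l (iter s.-1 Tm x) y != 0 -> exists z, iter s Tm z = 0 /\ moment s.-1 z != 0.
Proof.
move=> hx hy lxy.
have [mx|] := eqVneq (moment s.-1 x) 0; last by exists x.
have [my|] := eqVneq (moment s.-1 y) 0; last by exists y.
exists (x + y); split; first by rewrite iter_TmD hx hy addr0.
have sym : l (iter s.-1 Tm y) x = l (iter s.-1 Tm x) y.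
  by rewrite (form_iter_Tm_sym _ hy hx) formC (form_real_genker (iter_Tm_genker _ hx) hy).
rewrite /moment iter_TmD formDl !formDr -/(moment _ x) -/(moment _ y) mx my sym.
by rewrite add0r addr0 -mulr2n mulrn_eq0 negb_or lxy.
Qed.

(* Replacing [y] by [y + a Tm^(t+1) y] for a suitable real [a] kills the
   moment of index [s - 2 - t] without changing the higher ones. *)
Lemma kill_moment_step t y : (t < s.-1)%N -> iter s Tm y = 0 -> moment s.-1 y != 0 ->
  (forall q, (s.-1 - t <= q < s.-1)%N -> moment q y = 0) ->
  exists z, [/\ iter s Tm z = 0, moment s.-1 z = moment s.-1 y &
    forall q, (s.-1 - t.+1 <= q < s.-1)%N -> moment q z = 0].
Proof.
move=> ts hy cy low; set c := moment s.-1 y in cy *; set k0 := (s.-1 - t.+1)%N.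
pose a := - moment k0 y / (c *+ 2).
have a_real : a^* = a by rewrite /a fmorph_div rmorphN rmorphMn /= !(moment_real _ hy).
exists (y + a *: iter t.+1 Tm y); split.
- by rewrite iter_TmD iter_TmZ // (iter_Tm_genker _ hy) scaler0 addr0.
- rewrite moment_shift // (moment_high (q := s.-1 + t.+1) hy); last lia.
  rewrite (moment_high (q := s.-1 + t.+1 + t.+1) hy); last lia.
  by rewrite !mulr0 mul0rn !addr0.
move=> q /andP[q_ge q_lt].
rewrite moment_shift // (moment_high (q := q + t.+1 + t.+1) hy); last lia.
have [->|q_neq] := eqVneq q k0.
  have -> : (k0 + t.+1)%N = s.-1 by lia.
  by rewrite -/c /a mulr0 addr0; field.
rewrite low ?(moment_high (q := q + t.+1) hy) ?mulr0 ?mul0rn ?addr0 //.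
- by move/eqP: q_neq; lia.
- by apply/andP; split=> //; move/eqP: q_neq; lia.
Qed.

Lemma exists_moment_normal y : iter s Tm y = 0 -> moment s.-1 y != 0 ->
  exists z, [/\ iter s Tm z = 0, moment s.-1 z != 0 &
    forall q, (q < s.-1)%N -> moment q z = 0].
Proof.
move=> hy cy.
suff /(_ s.-1 (leqnn _)) [z [hz cz low]] : forall t, (t <= s.-1)%N ->
    exists z, [/\ iter s Tm z = 0, moment s.-1 z != 0 &
      forall q, (s.-1 - t <= q < s.-1)%N -> moment q z = 0].
  by exists z; split=> // q q_lt; apply: low; rewrite subnn q_lt.
elim=> [_|t IH ts]; first by exists y; split=> // q; rewrite subn0; lia.
have [z [hz cz low]] := IH (ltnW ts).
have [z' [hz' top' low']] := kill_moment_step ts hz cz low.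
by exists z'; rewrite top'.
Qed.

Lemma exists_moment_unit y : iter s Tm y = 0 -> moment s.-1 y != 0 ->
  (forall q, (q < s.-1)%N -> moment q y = 0) ->
  exists (eps : C) z, [/\ eps = 1 \/ eps = -1, iter s Tm z = 0, moment s.-1 z = eps &
    forall q, (q < s.-1)%N -> moment q z = 0].
Proof.
move=> hy cy low; set c := moment s.-1 y in cy.
pose r := (sqrtC `|c|)^-1.
have r_real : r^* = r.
  by apply: conj_Creal; rewrite rpredV ger0_real // sqrtC_ge0 normr_ge0.
have moment_scale q : moment q (r *: y) = `|c|^-1 * moment q y.
  by rewrite /moment iter_TmZ // formZl formZr r_real mulrA -invfM -expr2 sqrtCK.
exists (c / `|c|), (r *: y); split.
- have : c \is Num.real by rewrite CrealE (moment_real _ hy).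
  rewrite realE => /orP[c_ge0|c_le0]; first by left; rewrite ger0_norm ?divff.
  by right; rewrite ler0_norm // invrN mulrN divff.
- by rewrite iter_TmZ // hy scaler0.
- by rewrite moment_scale mulrC.
- by move=> q q_lt; rewrite moment_scale low ?mulr0.
Qed.

Section ChainBasis.
Variable y : 'rV[C]_n.
Hypothesis y_genker : iter s Tm y = 0.

Definition chain_mx : 'M[C]_(s, n) := \matrix_(i < s) iter (s.-1 - i) Tm y.

Lemma row_chain_mx i : row i chain_mx = iter (s.-1 - i) Tm y.
Proof. exact: rowK. Qed.

Lemma chain_act i :
  A (row i chain_mx) = \sum_(m < s) Jmx mu s m i *: row m chain_mx.
Proof.
have A_Tm z : A z = mu *: z + Tm z by rewrite /Tm addrC subrK.
under eq_bigr => m _ do rewrite /Jmx mxE scalerDl.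
rewrite big_split /= A_Tm; congr (_ + _).
  rewrite (bigD1 i) //= eqxx big1 ?addr0 // => m mi.
  by rewrite ifN ?scale0r.
rewrite !row_chain_mx; case: i => [[|i] hi] /=.
  rewrite big1 => [|m _]; last by rewrite scale0r.
  by rewrite subn0 -iterS prednK.
rewrite (bigD1 (Ordinal (ltnW hi))) //= eqxx scale1r big1 ?addr0.
  rewrite row_chain_mx /=.
  by have -> : (s.-1 - i)%N = (s.-1 - i.+1).+1 by lia.
move=> m mi; rewrite ifN ?scale0r //.
by apply: contra mi => /eqP [] h; apply/eqP; apply: val_inj => /=; rewrite h.
Qed.

Lemma chain_stable v : (v <= chain_mx)%MS -> (A v <= chain_mx)%MS.
Proof.
move=> /submxP[d ->]; rewrite mulmx_sum_row (big_morph A antilinD antilin0).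
apply: summx_sub => i _; rewrite antilinZ chain_act; apply: scalemx_sub.
by apply: summx_sub => m _; apply: scalemx_sub; exact: row_sub.
Qed.

Lemma chain_genker v : (v <= chain_mx)%MS -> iter s Nsq v = 0.
Proof.
move=> /submxP[d ->]; rewrite mulmx_sum_row.
rewrite (big_morph (iter s Nsq) (iter_NsqD s) (iter_Nsq0 s)) big1 // => i _.
by rewrite iter_NsqZ row_chain_mx iter_Nsq_of_Tm ?scaler0 // iter_Tm_genker.
Qed.

Variable eps : C.
Hypotheses (eps_neq0 : eps != 0) (moment_top : moment s.-1 y = eps).
Hypothesis moment_low : forall q, (q < s.-1)%N -> moment q y = 0.

Lemma chain_gram i j : l (row j chain_mx) (row i chain_mx) = eps * Smx C s i j.
Proof.
rewrite !row_chain_mx form_iter_Tm_moment // /Smx mxE.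
have := ltn_ord i; have := ltn_ord j.
case: ifP => [/eqP ij|/negbT/eqP ij] hj hi.
  by rewrite (_ : _ + _ = s.-1)%N ?moment_top ?mulr1 //; lia.
rewrite mulr0; have [lt|ge] := ltnP (s.-1 - j + (s.-1 - i)) s.-1; first exact: moment_low.
by apply: (moment_high y_genker); lia.
Qed.

Lemma chain_coord (d : 'rV_s) j :
  l (d *m chain_mx) (row j chain_mx) = eps * d 0 (rev_ord j).
Proof.
rewrite mulmx_sum_row (big_morph (l^~ _) (fun u v => formDl u v _) (form0l _)).
under eq_bigr => i _ do rewrite formZl chain_gram.
rewrite (bigD1 (rev_ord j)) //= big1 ?addr0 => [|i ij].
  rewrite /Smx mxE /= ifT; first by rewrite mulr1 mulrC.
  by apply/eqP; have := ltn_ord j; lia.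
rewrite /Smx mxE ifN ?mulr0 ?mul0r //; apply: contra ij => /eqP h.
by apply/eqP; apply: val_inj => /=; have := ltn_ord i; have := ltn_ord j; lia.
Qed.

Lemma chain_coord_eq0 (d : 'rV_s) :
  (forall j, l (d *m chain_mx) (row j chain_mx) = 0) -> d = 0.
Proof.
move=> hd; apply/rowP => i; rewrite mxE.
have := chain_coord d (rev_ord i); rewrite rev_ordK hd => /esym/eqP.
by rewrite mulf_eq0 (negbTE eps_neq0) => /eqP.
Qed.

Lemma chain_row_free : row_free chain_mx.
Proof. by apply/inj_row_free => d hd; apply: chain_coord_eq0 => j; rewrite hd form0l. Qed.

Lemma chain_nondeg v : (v <= chain_mx)%MS ->
  (forall w, (w <= chain_mx)%MS -> l v w = 0) -> v = 0.
Proof.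
move=> /submxP[d ->] hv; rewrite (chain_coord_eq0 (d := d)) ?mul0mx // => j.
by apply: hv; rewrite row_sub.
Qed.

End ChainBasis.

Theorem exists_jordan_basis :
  is_nondegenerate l -> (exists v, v != 0 /\ A (A v) = mu ^+ 2 *: v) ->
  (forall v, iter s Nsq v = 0 <-> iter n Nsq v = 0) ->
  (forall k, (0 < k < s)%N -> ~ (forall v, iter k Nsq v = 0 <-> iter n Nsq v = 0)) ->
  exists B : 'M[C]_(s, n),
    [/\ row_free B,
        (forall v, (v <= B)%MS -> (A v <= B)%MS),
        (forall v, (v <= B)%MS -> iter n Nsq v = 0),
        (forall v, (v <= B)%MS -> (forall w, (w <= B)%MS -> l v w = 0) -> v = 0) &
        exists eps : C, (eps = 1 \/ eps = -1) /\
          (forall i j : 'I_s, l (row j B) (row i B) = eps * Smx C s i j) /\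
          (forall i : 'I_s, A (row i B) = \sum_(m < s) Jmx mu s m i *: row m B)].
Proof.
move=> l_nondeg [v0 [v0_neq0 Av0]] ker_s ker_min.
have Nsq_v0 : Nsq v0 = 0 by rewrite /Nsq Av0 subrr.
have [v [vs vs1]] := exists_iter_index Nsq0 v0_neq0 Nsq_v0 s_gt0 ker_s ker_min.
have [x [xs xs1]] := exists_top_vector vs vs1.
set u := iter s.-1 Tm x in xs1.
have Tm_u : Tm u = 0 by rewrite /u -iterS prednK.
have u_ker : iter n Nsq u = 0.
  by apply/ker_s; rewrite -(prednK s_gt0) iterSr -Tp_Tm Tm_u Tp0 iter_Nsq0.
have [k [kn luk]] := genker_form_partner l_nondeg xs1 u_ker.
have [y0 [y0s luy0]] := exists_partner Tm_u (proj2 (ker_s k) kn) luk.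
have [y1 [y1s my1]] := exists_moment_top xs y0s luy0.
have [y2 [y2s my2 low2]] := exists_moment_normal y1s my1.
have [eps [y [eps1 ys ytop ylow]]] := exists_moment_unit y2s my2 low2.
have eps_neq0 : eps != 0 by case: eps1 => ->; rewrite ?oppr_eq0 oner_eq0.
exists (chain_mx y); split.
- exact: (chain_row_free ys eps_neq0 ytop ylow).
- exact: (chain_stable ys).
- by move=> w /(chain_genker ys) /ker_s.
- by move=> w; apply: (chain_nondeg ys eps_neq0 ytop ylow).
- exists eps; split=> //; split; first exact: (chain_gram ys eps_neq0 ytop ylow).
  exact: (chain_act ys).
Qed.

End Chain.

End ShiftedOperators.
End SelfadjointAntilinear.

Theorem mainTheorem10 (C : numClosedFieldType) (n : nat)
  (l : 'rV[C]_n -> 'rV[C]_n -> C) (A : 'rV[C]_n -> 'rV[C]_n) (lam : C)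
  (s1 : nat) :
  is_hermitian_form l -> is_nondegenerate l ->
  antilinear A -> l_selfadjoint l A ->
  0 < lam ^+ 2 ->
  (exists v : 'rV[C]_n, v != 0 /\ A (A v) = lam ^+ 2 *: v) ->
  (0 < s1)%N ->
  (forall v, in_kerpow A (lam ^+ 2) s1 v <-> in_kerpow A (lam ^+ 2) n v) ->
  (forall k, (0 < k < s1)%N ->
     ~ (forall v, in_kerpow A (lam ^+ 2) k v <-> in_kerpow A (lam ^+ 2) n v)) ->
  exists B : 'M[C]_(s1, n),
    [/\ row_free B,
        (forall v : 'rV[C]_n, (v <= B)%MS -> (A v <= B)%MS),
        (forall v : 'rV[C]_n, (v <= B)%MS -> in_kerpow A (lam ^+ 2) n v),
        (forall v : 'rV[C]_n, (v <= B)%MS ->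
           (forall w : 'rV[C]_n, (w <= B)%MS -> l v w = 0) -> v = 0) &
        exists eps : C, (eps = 1 \/ eps = -1) /\
          (forall i j : 'I_s1, l (row j B) (row i B) = eps * Smx C s1 i j) /\
          (forall i : 'I_s1,
             A (row i B) = \sum_(m < s1) Jmx `|lam| s1 m i *: row m B)].
Proof.
move=> l_herm l_nondeg A_antilin A_sa lam2_gt0 eigen s_gt0 ker_s ker_min.
set mu := `|lam|.
have mu_real : mu^* = mu by apply/conj_Creal/normr_real.
have mu_neq0 : mu != 0.
  by rewrite normr_eq0; apply: contraTneq lam2_gt0 => ->; rewrite expr0n ltxx.
have lam2E : lam ^+ 2 = mu ^+ 2 by rewrite real_normK // realEsqr ltW.
rewrite lam2E in eigen ker_s ker_min *.
exact: (exists_jordan_basis l_herm A_antilin A_sa mu_real mu_neq0 s_gt0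
         l_nondeg eigen ker_s ker_min).
Qed.
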